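(* For $r\in\{1,2\}$, $\mathcal{C}_r$ is a separable overpartition class with basis $\mathcal{G}_r=\bigcup_{m\ge1}\mathcal{G}_r(m)$. That is: - each $\mathcal{G}_r(m)$ is finite; - every overpartition in $\mathcal{C}_r$ with exactly $m\ge1$ parts can be written uniquely as $(b_1+\pi_1,\dots,b_m+\pi_m)$ with $(b_1,\dots,b_m)\in\mathcal{G}_r(m)$ and $\pi_1\ge\dots\ge\pi_m\ge0$ integers; - every such expression lies in $\mathcal{C}_r$. Consequently \[\sum_{\pi\in\mathcal{C}_r}q^{|\pi|}=1+\sum_{m\ge1}\frac{1}{(q;q)_m}\sum_{\pi\in\mathcal{G}_r(m)}q^{|\pi|}.\]
   Context: An overpartition is a partition in which the first occurrence of each part size may be overlined. Its parts are listed in non-increasing order with respect to $1<\bar1<2<\bar2<\cdots$. A part is of size $t$ if it is $t$ or $\bar t$. For an integer $b\ge0$, adding $b$ to a part of size $t$ gives the part of size $t+b$ with the same overline status. For $r\in\{1,2\}$, $\mathcal{C}_r$ is the set of overpartitions $(\pi_1,\dots,\pi_\ell)$ such that: - for each $1\le i<\ell$, the size of $\pi_i$ minus the size of $\pi_{i+1}$ is at least $1$, and at least $2$ if $\pi_i$ is non-overlined; - at most $r-1$ parts equal the non-overlined part $1$. For $m\ge1$, $\mathcal{G}(m)$ is the set of overpartitions $(\pi_1,\dots,\pi_m)$ such that for every $1\le i<m$, if $\pi_{i+1}$ has size $t$ then $\pi_i\in\{\overline{t+1},\,t+2\}$. Further: - $\mathcal{G}_2(m)$ is the subset of $\mathcal{G}(m)$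 with smallest part $\pi_m\in\{1,\bar1\}$; - $\mathcal{G}_1(m)$ is the subset with $\pi_m\in\{\bar1,2\}$. $(a;q)_n=\prod_{i=0}^{n-1}(1-aq^i)$. *)

From HB Require Import structures.
From mathcomp Require Import all_boot all_order all_algebra.
From mathcomp Require Import all_classical all_reals all_analysis.
Set Implicit Arguments. Unset Strict Implicit. Unset Printing Implicit Defensive.
Import Order.TTheory GRing.Theory Num.Theory.

(* A part is a pair (t, o): t = size, o = true iff overlined. *)
Definition part := (nat * bool)%type.
Definition overpartition := seq part.

(* Key for the order 1 < 1bar < 2 < 2bar < ... *)
Definition part_key (p : part) : nat := (2 * p.1 + p.2)%N.

(* p may be immediately followed by p' in an overpartition:
   non-increasing order, and equal parts only if non-overlined
   (only the first occurrence of a size may be overlined). *)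
Definition op_step (p p' : part) : bool :=
  (part_key p' < part_key p)%N || ((p == p') && ~~ p.2).

Definition is_overpartition (s : overpartition) : bool :=
  all (fun p => (0 < p.1)%N) s && sorted op_step s.

Definition weight (s : overpartition) : nat := sumn (map fst s).

Definition C_step (p p' : part) : bool :=
  (p'.1 + (if p.2 then 1 else 2) <= p.1)%N.

Definition C_class (r : nat) (s : overpartition) : bool :=
  [&& is_overpartition s, sorted C_step s & (count (pred1 (1%N, false)) s <= r.-1)%N].

Definition G_step (p p' : part) : bool :=
  (p == (p'.1.+1, true)) || (p == (p'.1.+2, false)).

Definition G_set (m : nat) (s : overpartition) : bool :=
  [&& size s == m, is_overpartition s & sorted G_step s].

Definition G_r (r m : nat) (s : overpartition) : bool :=
  G_set m s &&
  (last (0%N, false) s \in (if r == 1%N then [:: (1%N, true); (2%N, false)]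
                                         else [:: (1%N, false); (1%N, true)])).

Definition opshift (b : overpartition) (p : seq nat) : overpartition :=
  [seq ((x.1.1 + x.2)%N, x.1.2) | x <- zip b p].

Definition qpoch {R : comRingType} (a q : R) (n : nat) : R :=
  (\prod_(i < n) (1 - a * q ^+ i))%R.

From HB Require Import structures.
From mathcomp Require Import all_boot all_order all_algebra.
From mathcomp Require Import all_classical all_reals all_analysis.
From mathcomp Require Import zify.
Import Order.TTheory GRing.Theory Num.Theory.
Set Implicit Arguments. Unset Strict Implicit. Unset Printing Implicit Defensive.

(* The basis element of C_r underlying an overpartition depends only on its
   overline pattern: for a pattern (o_1, ..., o_m) there is exactly one chain
   in G_r(m), [chain_of r os], whose last part is the smallest part allowed in
   C_r with overline status o_m and whose consecutive parts differ by the
   minimal gap of C_r (1 after an overlined part, 2 otherwise).  Hence G_r(m)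
   is the image of the 2^m patterns (finiteness), a basis element is determined
   by its pattern (uniqueness), subtracting from x in C_r the chain of its own
   pattern leaves a non-increasing sequence of non-negative integers
   (existence), and adding such a sequence to a chain keeps all gaps and parts
   large enough (closure).  The generating function identity follows by
   summing over the resulting bijection G_r(m) x {p_1 >= ... >= p_m >= 0} ->
   {x in C_r with m parts}, using that the second factor has generating
   function 1/(q;q)_m, and then summing over m. *)

Section BasisChains.
Local Open Scope nat_scope.

Definition gap (o : bool) : nat := if o then 1 else 2.

(* The smallest size that a part with overline status [o] may have in C_r:
   for r = 1 the non-overlined part 1 is excluded. *)
Definition base_size (r : nat) (o : bool) : nat :=
  if (r == 1) && ~~ o then 2 else 1.

Definition admissible (r : nat) (c : part) : bool := base_size r c.2 <= c.1.

Lemma C_stepE (c h : part) : C_step c h = (h.1 + gap c.2 <= c.1).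
Proof. by case: c => t []. Qed.

Lemma G_stepE (c h : part) : G_step c h = (c == (h.1 + gap c.2, c.2)).
Proof.
by case: c => t [] /=; rewrite /G_step /= !xpair_eqE ?andbT ?andbF ?orbF ?addn1 ?addn2.
Qed.

Fixpoint chain_of (r : nat) (os : seq bool) : overpartition :=
  if os is o :: os' then
    let b := chain_of r os' in
    ((if b is h :: _ then h.1 + gap o else base_size r o), o) :: b
  else [::].

Lemma chain_of_cons2 r o o' os : chain_of r (o :: o' :: os) =
  ((head (0, false) (chain_of r (o' :: os))).1 + gap o, o) :: chain_of r (o' :: os).
Proof. by []. Qed.

Lemma size_chain_of r os : size (chain_of r os) = size os.
Proof. by elim: os => //= o os ->. Qed.

Lemma C_op (c h : part) : C_step c h -> op_step c h.
Proof.
rewrite C_stepE /op_step /part_key => H; apply/orP; left.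
by case: c H => t [] /=; case: h => t' [] /=; lia.
Qed.

Lemma G_op (c h : part) : G_step c h -> op_step c h.
Proof.
rewrite G_stepE => /eqP ->; rewrite /op_step /part_key /gap /=.
by case: h => t o; case: (c.2); case: o => /=; apply/orP; left; lia.
Qed.

Lemma admissible_gt0 r c : admissible r c -> 0 < c.1.
Proof. by rewrite /admissible /base_size; case: (_ && _); lia. Qed.

Lemma admissible_chain_of r os : all (admissible r) (chain_of r os).
Proof.
elim: os => //= o os IH; rewrite IH andbT /admissible /=.
case: (chain_of r os) IH => [|h b] //= /andP [/admissible_gt0 Hh _].
by rewrite /base_size /gap; case: (_ && _); case: o; lia.
Qed.

Lemma G_r_chain_of r os : os != [::] -> G_r r (size os) (chain_of r os).
Proof.
move=> os0; rewrite /G_r /G_set size_chain_of eqxx /is_overpartition.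
have -> : all (fun p => 0 < p.1) (chain_of r os).
  by apply: sub_all (admissible_chain_of r os) => c; apply: admissible_gt0.
have Gs : sorted G_step (chain_of r os).
  elim: os {os0} => //= o os; case: (chain_of r os) => //= h b IH.
  by rewrite IH andbT G_stepE.
rewrite (sub_sorted G_op Gs) Gs /= {Gs}.
case: os os0 => // o os _; elim: os o => [|o' os IH] o.
  by rewrite /= /base_size; case: (r == 1); case: o; rewrite !inE.
by rewrite /= in IH *; rewrite IH.
Qed.

Lemma G_r_chain r m b : G_r r m b -> b = chain_of r (map snd b).
Proof.
case/andP => /and3P [_ _ Gs]; elim: b Gs => // c b IH.
case: b IH => [|h b] IH.
  case: c => t o /=; rewrite /base_size.
  by case: (r == 1); case: o; rewrite !inE => _ /orP [] /eqP [->].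
case/andP => Gch Gs Hl; rewrite (chain_of_cons2 r c.2 h.2 (map snd b)).
rewrite -(IH Gs Hl); congr (_ :: _).
by move: Gch; rewrite G_stepE => /eqP.
Qed.

Lemma size_G_r r m b : G_r r m b -> size b = m.
Proof. by case/andP => /and3P [/eqP]. Qed.

(* Hence G_r(m) is finite: it is the image of the 2^m overline patterns. *)
Lemma G_r_finite r m : 0 < m ->
  exists l : seq overpartition, forall b, G_r r m b <-> b \in l.
Proof.
move=> m0; exists [seq chain_of r (val t) | t : m.-tuple bool] => b; split.
  move=> Gb; have Hs : size (map snd b) == m by rewrite size_map (size_G_r Gb).
  by rewrite (G_r_chain Gb); apply/mapP; exists (Tuple Hs); rewrite ?mem_enum.
case/mapP => t _ ->; rewrite -{1}(size_tuple t); apply: G_r_chain_of.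
by rewrite -size_eq0 size_tuple -lt0n.
Qed.

Lemma C_count1 (s : overpartition) : sorted C_step s -> count (pred1 (1, false)) s <= 1.
Proof.
elim: s => [|a s IH] //=; case: s IH => [|b s] IH /=; first by case: (a == _).
case/andP => Hab Hs; have := IH Hs; case Ea: (a == (1, false)) => //=.
by move/eqP: Ea Hab => ->; rewrite C_stepE /=; lia.
Qed.

Lemma C_classE r x : (r == 1) || (r == 2) ->
  C_class r x = sorted C_step x && all (admissible r) x.
Proof.
rewrite /C_class /is_overpartition => Hr.
have [Cs|] := boolP (sorted C_step x); last by rewrite !andbF.
rewrite (sub_sorted C_op Cs) andbT /=.
case/orP: Hr => /eqP ->.
  rewrite leqn0 eqn0Ngt -has_count -all_predC -all_predI.
  by apply: eq_all => -[[|[|t]] []].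
rewrite (C_count1 Cs : _ <= 2.-1) andbT; apply: eq_all => -[t o].
by rewrite /admissible /base_size.
Qed.

Lemma opshift_cons c b x p : opshift (c :: b) (x :: p) = (c.1 + x, c.2) :: opshift b p.
Proof. by []. Qed.

Lemma size_opshift b p : size (opshift b p) = minn (size b) (size p).
Proof. by rewrite size_map size_zip. Qed.

Lemma opshift_snd b p : size b = size p -> map snd (opshift b p) = map snd b.
Proof. by elim: b p => [|c b IH] [|x p] //= [] /IH ->. Qed.

Lemma weight_opshift b p : size b = size p -> weight (opshift b p) = weight b + sumn p.
Proof. by rewrite /weight; elim: b p => [|c b IH] [|x p] //= [] /IH ->; lia. Qed.

Lemma opshift_inj b p1 p2 : size p1 = size b -> size p2 = size b ->
  opshift b p1 = opshift b p2 -> p1 = p2.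
Proof.
elim: b p1 p2 => [|c b IH] [|x1 p1] [|x2 p2] //= [] H1 [] H2 [] E1 /(IH _ _ H1 H2) ->.
by congr (_ :: _); lia.
Qed.

(* Shifting a basis chain by a non-increasing sequence yields an element of
   C_r: differences between consecutive parts can only grow, and parts only
   get larger. *)
Lemma admissible_opshift r b p : all (admissible r) b -> all (admissible r) (opshift b p).
Proof.
elim: b p => [|c b IH] [|x p] //= /andP [Hc Hb]; rewrite IH // andbT.
by move: Hc; rewrite /admissible /=; lia.
Qed.

Lemma C_sorted_opshift r os p : size p = size os -> sorted geq p ->
  sorted C_step (opshift (chain_of r os) p).
Proof.
elim: os p => [|o os IH] [|x p] // [] Hs Hp.
case: os p IH Hs Hp => [|o' os] [|y p] // IH Hs /andP [Hxy Hp].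
rewrite chain_of_cons2; move: (IH (y :: p) Hs Hp).
case: (chain_of r (o' :: os)) => [|h b] //= ->; rewrite andbT C_stepE /=; lia.
Qed.

(* Every element of C_r is a shifted basis chain: the basis is read off from
   its overline pattern, the shifts are the part-by-part excesses. *)
Definition basis_of (r : nat) (x : overpartition) : overpartition := chain_of r (map snd x).

Definition shifts_of (r : nat) (x : overpartition) : seq nat :=
  [seq a.1.1 - a.2.1 | a <- zip x (basis_of r x)].

Lemma basis_of_cons2 r a a' x : basis_of r (a :: a' :: x) =
  ((head (0, false) (basis_of r (a' :: x))).1 + gap a.2, a.2) :: basis_of r (a' :: x).
Proof. by []. Qed.

Lemma shifts_of_cons r a x : shifts_of r (a :: x) =
  (a.1 - (head (0, false) (basis_of r (a :: x))).1) :: behead (shifts_of r (a :: x)).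
Proof. by []. Qed.

Lemma shifts_of_cons2 r a a' x : shifts_of r (a :: a' :: x) =
  (a.1 - ((head (0, false) (basis_of r (a' :: x))).1 + gap a.2)) :: shifts_of r (a' :: x).
Proof. by []. Qed.

Lemma chain_decomposition r x : sorted C_step x -> all (admissible r) x ->
  x = opshift (basis_of r x) (shifts_of r x) /\ sorted geq (shifts_of r x).
Proof.
move=> Cs Ax.
(* Induction invariant: the first basis part does not exceed the first part. *)
suff [] : [/\ x = opshift (basis_of r x) (shifts_of r x), sorted geq (shifts_of r x)
         & (head (0, false) (basis_of r x)).1 <= (head (0, false) x).1] by [].
elim: x Cs Ax => [|a x IH] // Cs /andP [Aa Ax].
case: x IH Cs Ax => [|a' x] IH Cs Ax.
  split => //=; case: a {Cs} Aa => t o; rewrite /admissible => Aa.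
  by rewrite /opshift /shifts_of /basis_of /= subnKC.
case/andP: Cs => Caa' Cs; have [E S Hh] := IH Cs Ax.
move: Caa'; rewrite C_stepE => Caa'.
rewrite shifts_of_cons2 basis_of_cons2 opshift_cons -E shifts_of_cons in S *.
move: (head _ (basis_of r (a' :: x))).1 Hh S => h /= Hh S.
split; [congr (_ :: _) | rewrite /= S andbT |]; last lia.
- by case: a Caa' {Aa} => t o /= Ht; congr (_, _); lia.
- by rewrite /geq /=; lia.
Qed.

Lemma compose_C r m b p : (r == 1) || (r == 2) ->
  G_r r m b -> size p = m -> sorted geq p -> C_class r (opshift b p).
Proof.
move=> Hr Gb Hp Sp; rewrite C_classE // (G_r_chain Gb).
rewrite C_sorted_opshift ?size_map ?(size_G_r Gb) //=.
by apply: admissible_opshift; apply: admissible_chain_of.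
Qed.

Lemma decompose_C r x : (r == 1) || (r == 2) -> C_class r x -> 0 < size x ->
  [/\ G_r r (size x) (basis_of r x), size (shifts_of r x) = size x,
      sorted geq (shifts_of r x) & x = opshift (basis_of r x) (shifts_of r x)].
Proof.
move=> Hr; rewrite C_classE // => /andP [Cs Ax] x0.
have [E S] := chain_decomposition Cs Ax.
split => //; last by rewrite size_map size_zip size_chain_of size_map minnn.
by rewrite -(size_map snd) /basis_of G_r_chain_of // -size_eq0 size_map -lt0n.
Qed.

Lemma decomposition_unique r m b1 p1 b2 p2 : G_r r m b1 -> G_r r m b2 ->
  size p1 = m -> size p2 = m -> opshift b1 p1 = opshift b2 p2 -> b1 = b2 /\ p1 = p2.
Proof.
move=> G1 G2 S1 S2 E.
have H1 : size b1 = size p1 by rewrite (size_G_r G1).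
have H2 : size b2 = size p2 by rewrite (size_G_r G2).
have Eb : b1 = b2.
  by rewrite (G_r_chain G1) (G_r_chain G2) -(opshift_snd H1) -(opshift_snd H2) E.
by subst b2; split => //; apply: (opshift_inj _ _ E); rewrite ?H1 ?H2 ?S1 ?S2.
Qed.
End BasisChains.

Section ExtendedSums.
Local Open Scope ring_scope.
Local Open Scope classical_set_scope.
Variable R : realType.

Lemma esumZl (T : choiceType) (S : set T) (c : R) (f : T -> \bar R) :
  0 <= c -> (forall i, 0 <= f i)%E ->
  (\esum_(i in S) (c%:E * f i) = c%:E * \esum_(i in S) f i)%E.
Proof.
move=> c0 f0; rewrite /esum -ereal_supZl //; last first.
  by apply/set0P; exists 0%E; exists set0; [exact: fsets_set0 | rewrite fsbig_set0].
by rewrite image_comp; congr ereal_sup; apply: eq_imagel => A _ /=; rewrite ge0_mule_fsumr.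
Qed.

Lemma esum_geometric (z : R) : 0 <= z -> z < 1 ->
  (\esum_(c in [set: nat]) (z ^+ c)%:E = ((1 - z)^-1)%:E)%E.
Proof.
move=> z0 z1; rewrite -nneseries_esumT; last by move=> n; rewrite lee_fin exprn_ge0.
apply: cvg_lim => //; apply: cvg_EFin; first by apply: nearW => n; rewrite sumEFin.
rewrite (_ : (fine \o _) = series (geometric 1 z)); last first.
  by apply/funext => n /=; rewrite sumEFin /series /=; apply: eq_bigr => i _; rewrite mul1r.
by have := @cvg_geometric_series R 1 z; rewrite mul1r ger0_norm //; apply.
Qed.

Lemma esum_prod (T1 T2 : choiceType) (I : set T1) (J : set T2)
    (a : T1 -> R) (b : T2 -> R) (c : R) :
  (forall i, 0 <= a i) -> (forall j, 0 <= b j) ->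
  (\esum_(j in J) (b j)%:E = c%:E)%E ->
  (\esum_(k in I `*`` (fun=> J)) (a k.1 * b k.2)%:E = c%:E * \esum_(i in I) (a i)%:E)%E.
Proof.
move=> a0 b0 Jc.
have c0 : 0 <= c by rewrite -lee_fin -Jc; apply: esum_ge0 => j _; rewrite lee_fin.
rewrite -(esum_esum (a := fun i j => (a i * b j)%:E)); last first.
  by move=> i j _ _; rewrite lee_fin mulr_ge0.
rewrite -esumZl //.
apply: eq_esum => i _; under eq_esum do rewrite EFinM.
by rewrite esumZl ?Jc 1?muleC // => j; rewrite lee_fin.
Qed.
End ExtendedSums.

Section GeneratingFunctions.
Local Open Scope ring_scope.
Local Open Scope classical_set_scope.
Variables (R : realType) (q : R).
Hypotheses (q_ge0 : 0 <= q) (q_lt1 : q < 1).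

Definition incr_seqs (m : nat) : set (seq nat) := [set p | size p = m /\ sorted leq p].
Definition decr_seqs (m : nat) : set (seq nat) := [set p | size p = m /\ sorted geq p].

Lemma sumn_addn c p : sumn (map (addn c) p) = (c * size p + sumn p)%N.
Proof. by elim: p => [|x p IH] /=; [rewrite muln0 | rewrite IH mulnS; lia]. Qed.

Lemma incr_seqs_bij m : set_bij ([set: nat] `*`` (fun=> incr_seqs m)) (incr_seqs m.+1)
  (fun cp => cp.1 :: map (addn cp.1) cp.2).
Proof.
split.
- move=> [c p] [_ [/= Hs Hp]]; split; first by rewrite /= size_map Hs.
  rewrite /= (path_sortedE leq_trans) all_map sorted_map; apply/andP; split.
    by apply/allP => x _ /=; rewrite leq_addr.
  by apply: sub_sorted Hp => x y /=; rewrite leq_add2l.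
- move=> [c1 p1] [c2 p2] _ _ /= [<-] /(inj_map (@addnI c1)) -> //.
- move=> [|c t] [//= [Hs] Hp].
  move: Hp; rewrite /= (path_sortedE leq_trans) => /andP [Ha Ht].
  exists (c, map (subn^~ c) t).
    split => //; split; first by rewrite size_map.
    by rewrite sorted_map; apply: sub_sorted Ht => x y /=; lia.
  rewrite /= -map_comp -[RHS]map_id; congr (_ :: _).
  by apply/eq_in_map => x /(allP Ha) /=; lia.
Qed.

Lemma qpoch_gf m : (\esum_(p in incr_seqs m) (q ^+ sumn p)%:E = ((qpoch q q m)^-1)%:E)%E.
Proof.
elim: m => [|m IH].
  rewrite (_ : incr_seqs 0 = [set [::]]); last first.
    by apply/seteqP; split => [p [/size0nil -> _] | p ->].
  by rewrite esum_set1 ?lee_fin ?exprn_ge0 //= /qpoch big_ord0 invr1.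
rewrite (reindex_esum _ _ _ _ (incr_seqs_bij m)).
under eq_esum => cp [_ [Hs _]] do
  rewrite /= sumn_addn Hs addnA -mulnS exprD (mulnC cp.1) exprM.
rewrite (esum_prod _ _ _ IH); last 2 first.
- by move=> c; rewrite !exprn_ge0.
- by move=> p; rewrite exprn_ge0.
rewrite esum_geometric ?exprn_ge0 ?exprn_ilt1 // -EFinM.
by rewrite /qpoch big_ord_recr /= invfM exprS.
Qed.

Lemma decr_gf m : (\esum_(p in decr_seqs m) (q ^+ sumn p)%:E = ((qpoch q q m)^-1)%:E)%E.
Proof.
rewrite -qpoch_gf (reindex_esum (incr_seqs m) (decr_seqs m) (@rev nat)).
  by apply: eq_esum => p _; rewrite sumn_rev.
split.
- by move=> p [Hs Hp]; split; [rewrite size_rev | rewrite rev_sorted].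
- by move=> p1 p2 _ _ E; rewrite -(revK p1) E revK.
- move=> p [Hs Hp]; exists (rev p); last by rewrite revK.
  by split; [rewrite size_rev | rewrite rev_sorted].
Qed.
End GeneratingFunctions.

Section SeparableClass.
Local Open Scope ring_scope.
Local Open Scope classical_set_scope.
Variable r : nat.
Hypothesis r12 : (r == 1)%N || (r == 2)%N.

Lemma C_size_bij m : (0 < m)%N ->
  set_bij ([set b | G_r r m b] `*`` (fun=> decr_seqs m))
    [set x | C_class r x /\ size x = m] (fun bp => opshift bp.1 bp.2).
Proof.
move=> m0; split.
- move=> [b p] [/= Gb [Hs Hp]]; split; first exact: compose_C Gb Hs Hp.
  by rewrite size_opshift (size_G_r Gb) Hs minnn.
- move=> [b1 p1] [b2 p2] /set_mem [/= G1 [S1 _]] /set_mem [/= G2 [S2 _]] /= E.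
  by have [-> ->] := decomposition_unique G1 G2 S1 S2 E.
- move=> x [Cx Sx]; rewrite -Sx in m0.
  have [Gb Sp Hp Ex] := decompose_C r12 Cx m0; rewrite Sx in Gb Sp.
  by exists (basis_of r x, shifts_of r x).
Qed.

Lemma C_size_gf (R : realType) (q : R) m : 0 <= q -> q < 1 -> (0 < m)%N ->
  (\esum_(x in [set x | C_class r x /\ size x = m]) (q ^+ weight x)%:E =
   ((qpoch q q m)^-1)%:E * \esum_(b in [set b | G_r r m b]) (q ^+ weight b)%:E)%E.
Proof.
move=> q0 q1 m0; rewrite (reindex_esum _ _ _ _ (C_size_bij m0)).
under eq_esum => bp [Gb [Hs _]] do
  rewrite /= weight_opshift ?(size_G_r Gb) ?Hs // exprD.
by rewrite (esum_prod (a := fun b => q ^+ weight b) _ _ _ (decr_gf q0 q1 m)) // => ?;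
  rewrite exprn_ge0.
Qed.

Lemma C_gf (R : realType) (q : R) : 0 <= q -> q < 1 ->
  (\esum_(x in [set x : overpartition | C_class r x]) (q ^+ weight x)%:E =
   1 + \sum_(1 <= m <oo)
         ((qpoch q q m)^-1%:E * \esum_(x in [set x | G_r r m x]) (q ^+ weight x)%:E))%E.
Proof.
move=> q0 q1.
have w0 (x : overpartition) : (0 <= (q ^+ weight x)%:E)%E by rewrite lee_fin exprn_ge0.
have -> : [set x : overpartition | C_class r x] =
    \bigcup_(m in [set: nat]) [set x | C_class r x /\ size x = m].
  by apply/seteqP; split => [x Cx | x [m _ [Cx _]]] //; exists (size x).
rewrite esum_bigcupT //; last by move=> i j _ _ [x [[_ <-] [_ <-]]].
rewrite -nneseries_esumT; last by move=> n; apply: esum_ge0.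
rewrite nneseries_recl //; last by move=> n _; apply: esum_ge0.
congr (_ + _)%E.
  rewrite (_ : [set x | C_class r x /\ size x = 0%N] = [set [::]]).
    by rewrite esum_set1 // lee_fin expr0.
  by apply/seteqP; split => [x [_ /size0nil ->] | x ->].
congr (limn _); apply/funext => n; apply: eq_big_nat => m /andP [m0 _].
exact: C_size_gf.
Qed.
End SeparableClass.

Unset Implicit Arguments. Set Strict Implicit.
Local Open Scope classical_set_scope.
Local Open Scope ring_scope.

Theorem mainTheorem11 (R : realType) (r : nat) :
  (r == 1)%N || (r == 2)%N ->
  (* each G_r(m) is finite *)
  (forall m : nat, (1 <= m)%N ->
     exists l : seq overpartition, forall b, G_r r m b <-> b \in l) /\
  (* unique decomposition of every element of C_r with m parts *)
  (forall (m : nat) (x : overpartition), (1 <= m)%N ->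
     C_class r x -> size x = m ->
     exists! bp : overpartition * seq nat,
       [/\ G_r r m (fst bp), size (snd bp) = m, sorted [rel i j : nat | (j <= i)%N] (snd bp) & x = opshift (fst bp) (snd bp)]) /\
  (* every such expression lies in C_r *)
  (forall (m : nat) (b : overpartition) (p : seq nat), (1 <= m)%N ->
     G_r r m b -> size p = m -> sorted [rel i j : nat | (j <= i)%N] p -> C_class r (opshift b p)) /\
  (* generating function identity, for every real q with 0 <= q < 1 *)
  (forall q : R, 0 <= q < 1 ->
     (\esum_(x in [set x : overpartition | C_class r x]) (q ^+ weight x)%:E =
      1 + \sum_(1 <= m <oo)
            ((qpoch q q m)^-1%:E *
             \esum_(x in [set x : overpartition | G_r r m x]) (q ^+ weight x)%:E))%E).
Proof.
move=> Hr; split; first by move=> m; apply: G_r_finite.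
split.
  move=> m x m0 Cx Sx; rewrite -Sx in m0.
  have [Gb Sp Hp Ex] := decompose_C Hr Cx m0; rewrite Sx in Gb Sp.
  exists (basis_of r x, shifts_of r x); split => // -[b p] [/= Gb' Sp' _ Ex'].
  by have [-> ->] := decomposition_unique Gb Gb' Sp Sp' (etrans (esym Ex) Ex').
split; first by move=> m b p _; apply: compose_C.
by move=> q /andP [q0 q1]; apply: C_gf.
Qed.
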